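(* Let $n\ge2$ and let $x\in\overline{L_n}$ be an ultrafilter that is not irreducible in $\beta\mathbb{N}$. Then there exist $i,j<n$ and ultrafilters $x_i\in\overline{L_i}$, $x_j\in\overline{L_j}$ such that $x=x_ix_j$.
   Context: $\mathbb{N}=\{1,2,3,\dots\}$; $\beta\mathbb{N}$ is the set of ultrafilters on $\mathbb{N}$ (Stone–Čech compactification, naturals identified with principal ultrafilters), with multiplication: $A\in xy$ iff $\{n:A/n\in y\}\in x$, $A/n=\{m:mn\in A\}$. For $A\subseteq\mathbb{N}$, $\overline{A}=\{x\in\beta\mathbb{N}:A\in x\}$. $P$ is the set of primes, $L_0=\{1\}$, $L_n=\{a_1\cdots a_n:a_i\in P\}$. An element $p\in\beta\mathbb{N}$ is irreducible if it cannot be written as $p=xy$ with $x,y\in\beta\mathbb{N}\setminus\{1\}$. *)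

(* Ultrafilters on N = {1,2,3,...} are represented as
   collections of subsets of nat (predicates nat -> Prop) containing the set
   of positive naturals. *)
From mathcomp Require Import all_boot.
Set Implicit Arguments. Unset Strict Implicit. Unset Printing Implicit Defensive.

Definition nset := nat -> Prop.
Definition UF := nset -> Prop.

Definition Npos : nset := fun m => 0 < m.

Definition is_ultrafilter (x : UF) : Prop :=
  [/\ x Npos,
      ~ x (fun _ => False),
      (forall A B : nset, x A -> (forall m, A m -> B m) -> x B),
      (forall A B : nset, x A -> x B -> x (fun m => A m /\ B m)) &
      (forall A : nset, x A \/ x (fun m => ~ A m))].

Definition principal (k : nat) : UF := fun A => A k.

Definition divset (A : nset) (n : nat) : nset := fun m => A (m * n).

Definition uf_mul (x y : UF) : UF :=
  fun A => x (fun n => y (divset A n)).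

Definition irreducible (p : UF) : Prop :=
  ~ exists x y : UF, [/\ is_ultrafilter x, is_ultrafilter y,
                        x <> principal 1, y <> principal 1 & p = uf_mul x y].

Definition L (n : nat) : nset :=
  fun m => exists s : seq nat, [/\ size s = n, all prime s & \prod_(p <- s) p = m].

(* Write [x = y z] with [y, z <> 1] and pick [a] with [z (L n / a)].  The
   number of prime factors is additive, so if [a] lies in [L i] then
   [L n / a] is contained in [L j], [j = n - i], and [z] contains [L j].  Now
   for every [a'] with [z (L n / a')] that set meets [L j], which forces [a']
   into [L i]; hence [y] contains [L i].  An ultrafilter containing
   [L 0 = {1}] is principal at [1], so [i, j > 0] and both are below [n]. *)
From mathcomp Require Import all_boot.
From mathcomp Require Import zify.
From Stdlib Require Import Classical FunctionalExtensionality PropExtensionality.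
Set Implicit Arguments. Unset Strict Implicit.

Lemma prime_mem_of_dvd_prod p t :
  prime p -> all prime t -> p %| \prod_(q <- t) q -> p \in t.
Proof.
move=> p_pr /allP t_pr; rewrite Euclid_dvd_prod // big_has => /hasP[q qt pq].
by rewrite (eqP _ : p = q) // -dvdn_prime2 // t_pr.
Qed.

Lemma size_prime_seq_eq s t : all prime s -> all prime t ->
  \prod_(p <- s) p = \prod_(p <- t) p -> size s = size t.
Proof.
elim: s t => [|p s IHs] t /=.
  case: t => [|q t] //= _ /andP[q_pr _]; rewrite big_nil big_cons => /esym/eqP.
  by rewrite muln_eq1 => /andP[/eqP q1 _]; rewrite q1 in q_pr.
move=> /andP[p_pr s_pr] t_pr prod_st.
have pt : p \in t.
  by apply: prime_mem_of_dvd_prod => //; rewrite -prod_st big_cons dvdn_mulr.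
rewrite (perm_big _ (perm_to_rem pt)) !big_cons /= in prod_st.
move/eqP: prod_st; rewrite eqn_pmul2l ?prime_gt0 // => /eqP prod_st.
have rem_pr : all prime (rem p t) by apply/allP => q /mem_rem /(allP t_pr).
rewrite (IHs _ s_pr rem_pr prod_st) size_rem // prednK //.
by case: t pt {t_pr prod_st rem_pr}.
Qed.

Lemma L_unique i j m : L i m -> L j m -> i = j.
Proof. by move=> [s [<- s_pr <-]] [t [<- t_pr /esym]]; apply: size_prime_seq_eq. Qed.

Lemma L_gt0 k m : L k m -> 0 < m.
Proof.
move=> [s [_ /allP s_pr <-]]; rewrite big_seq prodn_cond_gt0 // => p /s_pr.
exact: prime_gt0.
Qed.

Lemma L_mul i j a b : L i a -> L j b -> L (i + j) (a * b).
Proof.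
move=> [s [<- s_pr <-]] [t [<- t_pr <-]]; exists (s ++ t).
by rewrite size_cat all_cat s_pr t_pr big_cat.
Qed.

Lemma L_exists m : 0 < m -> exists k, L k m.
Proof.
elim/ltn_ind: m => m IHm m_gt0; have [m_gt1 | m_le1] := ltnP 1 m; last first.
  by exists 0, [::]; rewrite big_nil; split => //; apply/eqP; rewrite eqn_leq m_gt0.
have p_pr := pdiv_prime m_gt1; set p := pdiv m in p_pr *.
have def_m : m = p * (m %/ p) by rewrite mulnC divnK // pdiv_dvd.
have [k Lk] : exists k, L k (m %/ p).
  apply: IHm; first by rewrite ltn_Pdiv ?prime_gt1.
  by rewrite divn_gt0 ?prime_gt0 // pdiv_leq.
by exists (1 + k); rewrite def_m; apply: L_mul Lk; exists [:: p]; rewrite big_seq1 /= p_pr.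
Qed.

Lemma L_mul_split k m a : L k (m * a) ->
  exists i j, [/\ L i m, L j a & i + j = k].
Proof.
move=> Lma; have := L_gt0 Lma; rewrite muln_gt0 => /andP[m_gt0 a_gt0].
have [[i Lm] [j La]] := (L_exists m_gt0, L_exists a_gt0).
by exists i, j; split; last exact: L_unique (L_mul Lm La) Lma.
Qed.

Lemma L_cancel i j m a : L i m -> L (i + j) (m * a) -> L j a.
Proof.
move=> Lm /L_mul_split[i' [j' [Lm' La ij_eq]]].
by rewrite (L_unique Lm' Lm) in ij_eq; rewrite -(addnI ij_eq).
Qed.

Lemma L0_eq1 m : L 0 m -> m = 1.
Proof. by move=> [[|? ?] [//= _ _ <-]]; rewrite big_nil. Qed.

Section Ultrafilter.

Variable z : UF.
Hypothesis z_uf : is_ultrafilter z.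

Lemma uf_mono A B : z A -> (forall m, A m -> B m) -> z B.
Proof. by case: z_uf => _ _ mono _ _; apply: mono. Qed.

Lemma uf_nonempty A : z A -> exists m, A m.
Proof.
move=> zA; apply: NNPP => noA; case: z_uf => _ z_nonfalse _ _ _.
by apply/z_nonfalse/(uf_mono zA) => m Am; apply: noA; exists m.
Qed.

Lemma uf_meet_nonempty A B : z A -> z B -> exists m, A m /\ B m.
Proof. by case: z_uf => _ _ _ meet _ zA zB; apply/uf_nonempty/meet. Qed.

Lemma uf_principal1 : z (L 0) -> z = principal 1.
Proof.
move=> zL0; apply: functional_extensionality => A.
apply: propositional_extensionality; split => [zA | A1].
  by have [m [Am /L0_eq1 m1]] := uf_meet_nonempty zA zL0; rewrite -m1.
by apply: (uf_mono zL0) => m /L0_eq1 ->.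
Qed.

End Ultrafilter.

Lemma uf_mul_L y z n : is_ultrafilter y -> is_ultrafilter z ->
  uf_mul y z (L n) -> exists i j, [/\ i + j = n, y (L i) & z (L j)].
Proof.
move=> y_uf z_uf yzL.
have [a za] := uf_nonempty y_uf yzL.
have [m Lma] := uf_nonempty z_uf za.
have [j [i [_ La def_n]]] := L_mul_split Lma.
have zLj : z (L j).
  apply: (uf_mono z_uf za) => m' Lm'a.
  by apply: (L_cancel La); rewrite mulnC addnC def_n.
have yLi : y (L i).
  apply: (uf_mono y_uf yzL) => a' za'.
  have [m' [Lm'a' Lm']] := uf_meet_nonempty z_uf za' zLj.
  by apply: (L_cancel Lm'); rewrite def_n.
by exists i, j; rewrite addnC.
Qed.

Unset Implicit Arguments.

Theorem corollary2p12 (n : nat) (x : UF) :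
  2 <= n -> is_ultrafilter x -> x (L n) -> ~ irreducible x ->
  exists (i j : nat) (xi xj : UF),
    i < n /\ j < n /\ is_ultrafilter xi /\ is_ultrafilter xj /\
    xi (L i) /\ xj (L j) /\ x = uf_mul xi xj.
Proof.
move=> _ x_uf xL /NNPP[y [z [y_uf z_uf y_ne1 z_ne1 def_x]]]; subst x.
have [i [j [def_n yLi zLj]]] := uf_mul_L y_uf z_uf xL.
have i_gt0 : 0 < i by case: i yLi {def_n} => // /(uf_principal1 y_uf) /y_ne1.
have j_gt0 : 0 < j by case: j zLj {def_n} => // /(uf_principal1 z_uf) /z_ne1.
exists i, j, y, z; rewrite -def_n; do !split => //; lia.
Qed.
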